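(* Let $S\subset\mathbb{N}$ be a WM set with density $d(S)<1$. Then $S$ is not an IP*-set, i.e. there exists an IP-set $E$ with $E\cap S=\emptyset$.
   Context: $\mathbb{N}=\{1,2,\dots\}$. An IP-set is a set $\{p_{i_1}+\dots+p_{i_k}: k\in\mathbb{N},\ i_1<\dots<i_k\}$ for an infinite sequence $(p_i)$ of natural numbers. $S$ is an IP*-set if $S$ meets every IP-set. $\Omega=\{0,1\}^{\mathbb{N}}$ with product topology and left shift $T$; $X_{1_S}$ is the closure of $\{T^n1_S:n\ge0\}$. A point $\xi$ is generic for $(X,\mu,T)$ if $\frac1N\sum_{n=0}^{N-1}f(T^n\xi)\to\int f\,d\mu$ for all continuous $f$. $d(S)=\lim_N\frac1N|S\cap\{1,\dots,N\}|$. $S$ is a WM set if for some $T$-invariant Borel probability $\mu$ on $X_{1_S}$, $1_S$ is generic for $(X_{1_S},\mu,T)$, this system is weakly mixing, and $d(S)>0$. *)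

From HB Require Import structures.
From mathcomp Require Import all_boot all_order all_algebra.
From mathcomp Require Import all_classical all_reals all_analysis.
Set Implicit Arguments. Unset Strict Implicit. Unset Printing Implicit Defensive.
Import Order.TTheory GRing.Theory Num.Theory.
Import numFieldTopology.Exports numFieldNormedType.Exports.
Local Open Scope classical_set_scope.
Local Open Scope ring_scope.

(* Omega = {0,1}^N with the product topology (mathcomp-analysis' cantor_space).
   Coordinate k : nat (k = 0,1,2,...) represents the natural number k+1,
   since the paper's N = {1,2,...}. *)
Definition Omega : topologicalType := cantor_space.

Definition shift (x : Omega) : Omega := fun k => x k.+1.

Definition OmegaB := g_sigma_algebraType (@open Omega).

Definition indic (S : set nat) : Omega := fun k => `[< S k.+1 >].

Definition orbit_closure (xi : Omega) : set Omega :=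
  closure (range (fun n => iter n shift xi)).

(* A Borel probability measure on X (encoded as a Borel probability on Omega
   giving full mass to the closed set X). *)
Definition supported_on {R : realType} (mu : probability OmegaB R) (X : set Omega) :=
  mu (X : set OmegaB) = 1%E.

Definition shift_invariant {R : realType} (mu : probability OmegaB R) :=
  forall A : set OmegaB, measurable A -> mu (shift @^-1` A) = mu A.

Definition generic_point {R : realType} (X : set Omega)
    (mu : probability OmegaB R) (xi : Omega) :=
  forall f : Omega -> R, {within X, continuous f} ->
    (fun N : nat => N%:R^-1 * \sum_(n < N) f (iter n shift xi))
      @ \oo --> Rintegral mu (X : set OmegaB) f.

Definition weakly_mixing {R : realType} (X : set Omega) (mu : probability OmegaB R) :=
  forall A B : set OmegaB, measurable A -> measurable B ->
    A `<=` X -> B `<=` X ->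
    (fun N : nat => N%:R^-1 * \sum_(n < N)
        `| fine (mu ((iter n shift @^-1` A) `&` B)) - fine (mu A) * fine (mu B) |)
      @ \oo --> (0 : R).

Definition dens_avg {R : realType} (S : set nat) (N : nat) : R :=
  N%:R^-1 * (\sum_(1 <= k < N.+1) (if `[< S k >] then 1 else 0)).

Definition has_density {R : realType} (S : set nat) (d : R) :=
  (fun N => dens_avg (R := R) S N) @ \oo --> d.

Definition WM_set (R : realType) (S : set nat) :=
  (exists mu : probability OmegaB R,
      [/\ supported_on mu (orbit_closure (indic S)), shift_invariant mu,
          generic_point (orbit_closure (indic S)) mu (indic S)
        & weakly_mixing (orbit_closure (indic S)) mu]) /\
  exists d : R, has_density S d /\ 0 < d.

Definition FS (p : nat -> nat) : set nat :=
  [set m | exists s : seq nat, [/\ s != [::], sorted ltn s & m = (\sum_(i <- s) p i)%N]].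

Definition IP_set (E : set nat) :=
  exists p : nat -> nat, (forall i, (0 < p i)%N) /\ E = FS p.

Definition IPstar (S : set nat) :=
  forall E, IP_set E -> E `&` S !=set0.

From Pilot Require Import Defs.
From HB Require Import structures.
From mathcomp Require Import all_boot all_order all_algebra.
From mathcomp Require Import all_classical all_reals all_analysis.
From mathcomp Require Import lra.
Import Order.TTheory GRing.Theory Num.Theory.
Import numFieldTopology.Exports numFieldNormedType.Exports.
Local Open Scope classical_set_scope.
Local Open Scope ring_scope.

(* Let X be the orbit closure of 1_S and Z_F the cylinder of points of X that
   vanish on the finite set F of coordinates; since coordinate s of T^m 1_S
   records whether s + m + 1 is in S, T^m 1_S lies in Z_F iff F + (m + 1)
   avoids S.  Start from Z_{0}, of measure 1 - d(S) > 0.  If mu(Z_F) = c > 0,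
   genericity makes T^m 1_S visit Z_F with frequency c, while weak mixing makes
   mu(Z_F /\ T^-n Z_F) = mu(Z_{F u (F+n)}) close to c^2 for most n; so for some
   n = m + 1 both F + n avoids S and mu(Z_{F u (F+n)}) > 0.  Iterating yields
   p_1, p_2, ... with every finite sum of the p_i outside S. *)

Section SubsetSums.
Variables (p : nat -> nat) (sums : nat -> seq nat).
Hypothesis sums0 : sums 0 = [:: 0%N].
Hypothesis sumsS : forall k, sums k.+1 = sums k ++ map (addn (p k)) (sums k).

Lemma sums_monotone {k l} : (k <= l)%N -> {subset sums k <= sums l}.
Proof.
move=> /subnKC <-; elim: (l - k)%N => [|m IH] x; first by rewrite addn0.
by rewrite addnS sumsS mem_cat => /IH ->.
Qed.

Lemma mem_sums s k : sorted ltn s -> all (fun i => i < k)%N s ->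
  (\sum_(i <- s) p i)%N \in sums k.
Proof.
elim/last_ind: s k => [|s j IH] k.
  by rewrite big_nil => _ _; apply: (@sums_monotone 0); rewrite // sums0 inE.
rewrite (sorted_pairwise ltn_trans) pairwise_rcons -(sorted_pairwise ltn_trans).
rewrite all_rcons big_rcons /= => /andP[s_lt_j s_sorted] /andP[j_lt_k _].
apply: (sums_monotone j_lt_k); rewrite sumsS mem_cat addnC.
by apply/orP; right; apply: map_f; exact: IH.
Qed.
End SubsetSums.

Lemma exists_IP_set_disjoint (S : set nat) (P : seq nat -> Prop) :
  P [:: 0%N] ->
  (forall F, P F -> exists n, [/\ (0 < n)%N, {in F, forall s, ~ S (s + n)%N}
                                & P (F ++ map (addn n) F)]) ->
  exists E, IP_set E /\ E `&` S = set0.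
Proof.
move=> P0 extend.
have /choice[g gP] : forall F, exists n, P F ->
    [/\ (0 < n)%N, {in F, forall s, ~ S (s + n)%N} & P (F ++ map (addn n) F)].
  move=> F; case: (pselect (P F)) => [/extend[n Hn]|notPF]; first by exists n.
  by exists 0%N => /notPF.
pose sums := fix sums k :=
  if k is k'.+1 then sums k' ++ map (addn (g (sums k'))) (sums k') else [:: 0%N].
pose p k := g (sums k).
have P_sums k : P (sums k) by elim: k => [//|k /gP[]].
have p_gt0 k : (0 < p k)%N by have [] := gP _ (P_sums k).
have sums_avoid k m : m \in sums k -> m = 0%N \/ ~ S m.
  elim: k m => [|k IH] m /=; first by rewrite inE => /eqP->; left.
  rewrite mem_cat => /orP[/IH//|/mapP[s sF ->]]; right; rewrite addnC.
  by have [_ + _] := gP _ (P_sums k); apply.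
exists (FS p); split; first by exists p.
apply/seteqP; split => // _ [[s [s_neq0 s_sorted ->]] Ssum].
have sum_gt0 : (0 < \sum_(i <- s) p i)%N.
  by case: s s_neq0 {s_sorted Ssum} => [//|i s] _; rewrite big_cons addn_gt0 p_gt0.
have s_lt : all (fun i => i < (\max_(i <- s) i).+1)%N s.
  by apply/allP => i si; rewrite ltnS; apply: leq_bigmax_seq.
have := sums_avoid _ _ (mem_sums p sums erefl (fun _ => erefl) _ _ s_sorted s_lt).
by case=> // sum0; rewrite sum0 in sum_gt0.
Qed.

Definition cesaro_mean {R : numFieldType} (u : nat -> R) (N : nat) : R :=
  N%:R^-1 * \sum_(n < N) u n.

Lemma invr_le_double_invrD1 {R : realFieldType} (x : R) :
  1 <= x -> x^-1 <= 2 / (x + 1).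
Proof. by move=> x_ge1; rewrite -invf_div lef_pV2 ?posrE; lra. Qed.

Lemma cesaro_mixing_return {R : realType} {b : nat -> bool} {a : nat -> R} {c : R} :
  0 < c -> cesaro_mean (fun m => (b m)%:R) @ \oo --> c ->
  cesaro_mean (fun n => `|a n - c * c|) @ \oo --> 0 ->
  exists2 m, b m & 0 < a m.+1.
Proof.
move=> c_gt0 b_mean g_mean; apply: contrapT => no_return.
pose g n : R := `|a n - c * c|.
have g_ge_b m : c * c * (b m)%:R <= g m.+1.
  case: (boolP (b m)) => bm; last by rewrite mulr0 normr_ge0.
  have : a m.+1 <= 0 by rewrite leNgt; apply/negP => ?; apply: no_return; exists m.
  rewrite mulr1 /g -normrN => ?; apply: le_trans (ler_norm _); lra.
have bound : \forall N \near \oo,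
    c * c * cesaro_mean (fun m => (b m)%:R) N <= 2 * cesaro_mean g N.+1.
  near=> N; have N_gt0 : (0 < N)%N by near: N; exact: nbhs_infty_gt.
  rewrite /cesaro_mean mulrCA mulr_sumr mulrA.
  have cb_ge0 m : 0 <= c * c * (b m)%:R by rewrite !mulr_ge0 ?ler0n // ltW.
  apply: ler_pM; [by rewrite invr_ge0 | exact: sumr_ge0 | | ].
    by rewrite -[N.+1%:R]natr1 invr_le_double_invrD1 ?ler1n.
  rewrite big_ord_recl -[leLHS]add0r; apply: lerD; first exact: normr_ge0.
  by apply: ler_sum => i _; exact: g_ge_b.
have lhs : c * c * cesaro_mean (fun m => (b m)%:R) N @[N --> \oo] --> c * c * c.
  exact: cvgMl_tmp b_mean.
have rhs : 2 * cesaro_mean g N.+1 @[N --> \oo] --> (2 * 0 : R).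
  by apply: cvgMl_tmp; rewrite (cvg_shiftS (cesaro_mean g)).
have ccc_gt0 : 0 < c * c * c by rewrite !mulr_gt0.
have : c * c * c <= 2 * 0 by exact: ler_cvg_to lhs rhs bound.
by rewrite mulr0 leNgt ccc_gt0.
Unshelve. all: by end_near.
Qed.

Lemma nbhs_coords_eq (x : Omega) (F : seq nat) :
  \forall y \near x, {in F, y =1 x}.
Proof.
elim: F => [|s F IH]; first by apply: (nearW (nbhs_filter x)) => y s.
have near_s : \forall y \near x, y s = x s.
  by apply: (@proj_continuous nat (fun _ => bool) s x [set x s]); exact: discrete_set1.
apply: filterS2 (nbhs_filter x) _ _ _ _ IH near_s => y eqF eqs t.
by rewrite inE => /orP[/eqP-> //|]; exact: eqF.
Qed.

Lemma shift_continuous : continuous Defs.shift.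
Proof.
move=> x; apply/(@pointwise_cvgP nat bool (Defs.shift @ x) (Defs.shift x)) => k.
exact: (@proj_continuous nat (fun _ => bool) k.+1 x).
Qed.

Lemma iter_shiftE n (x : Omega) k : iter n Defs.shift x k = x (k + n)%N.
Proof.
by elim: n k => [|n IH] k /=; [rewrite addn0 | rewrite /Defs.shift IH addSnnS].
Qed.

Lemma orbit_closure_iter_shift xi x n :
  orbit_closure xi x -> orbit_closure xi (iter n Defs.shift x).
Proof.
elim: n => [//|n IH] /IH xn B /= nB.
have [_ [[m _ <-] Bm]] := xn _ (shift_continuous _ _ nB).
by exists (iter m.+1 Defs.shift xi); split => //; exists m.+1.
Qed.

Definition zeros_on (F : seq nat) : set Omega := [set x | all (fun s => ~~ x s) F].

Lemma in_zeros_on F x : (x \in zeros_on F) = all (fun s => ~~ x s) F.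
Proof. by apply/idP/idP; rewrite inE. Qed.

Lemma zeros_on_locally_constant F (x : Omega) :
  \forall y \near x, (y \in zeros_on F) = (x \in zeros_on F).
Proof.
apply: filterS (nbhs_coords_eq x F) => y eqF.
by rewrite !in_zeros_on; apply: eq_in_all => s /eqF ->.
Qed.

Lemma open_zeros_on F : open (zeros_on F).
Proof.
rewrite openE => x zx; apply: filterS (zeros_on_locally_constant F x) => y.
by rewrite (mem_set zx) => /set_mem.
Qed.

Lemma continuous_indic_zeros_on (R : realType) F :
  continuous (\1_(zeros_on F) : Omega -> R).
Proof.
move=> x; apply: (@cvg_near_cst _ _ _ _ _ (nbhs_filter x)).
by apply: filterS (zeros_on_locally_constant F x) => y /= eqx; rewrite /indic eqx.
Qed.

Lemma measurable_open (A : set Omega) : open A -> measurable (A : set OmegaB).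
Proof. exact: sub_sigma_algebra. Qed.

Lemma measurable_orbit_closure xi : measurable (orbit_closure xi : set OmegaB).
Proof.
rewrite -[orbit_closure xi]setCK; apply: measurableC; apply: measurable_open.
by rewrite openC; exact: closed_closure.
Qed.

Lemma preimage_iter_shift_zeros_on xi F n :
  let A := zeros_on F `&` orbit_closure xi in
  iter n Defs.shift @^-1` A `&` A = zeros_on (F ++ map (addn n) F) `&` orbit_closure xi.
Proof.
apply/seteqP; split => x /=.
  move=> [[zn _] [zx Xx]]; split => //; rewrite /zeros_on /= all_cat zx all_map.
  by apply/allP => s sF /=; rewrite addnC -iter_shiftE (allP zn s sF).
rewrite /zeros_on /= all_cat all_map => -[/andP[zx zn] Xx].
split; split => //; last exact: orbit_closure_iter_shift.
by apply/allP => s sF; rewrite iter_shiftE addnC; exact: (allP zn s sF).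
Qed.

Section GenericWeaklyMixing.
Context {R : realType} {S : set nat} {mu : probability OmegaB R}.
Let xi := Defs.indic S.
Let X := orbit_closure xi.
Hypothesis xi_generic : generic_point X mu xi.
Hypothesis mu_weakly_mixing : weakly_mixing X mu.

Definition zeros_mass F : R := fine (mu (zeros_on F `&` X)).

Lemma measurable_zeros_on_orbit F : measurable (zeros_on F `&` X : set OmegaB).
Proof.
apply: measurableI; last exact: measurable_orbit_closure.
by apply: measurable_open; exact: open_zeros_on.
Qed.

Lemma cesaro_zeros_on F :
  cesaro_mean (fun n => (iter n Defs.shift xi \in zeros_on F)%:R) @ \oo --> zeros_mass F.
Proof.
have := xi_generic _ (continuous_subspaceT (@continuous_indic_zeros_on R F)).
rewrite /Rintegral integral_indic //; first exact: measurable_orbit_closure.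
by apply: measurable_open; exact: open_zeros_on.
Qed.

Lemma cesaro_mixing_zeros_on F :
  cesaro_mean (fun n => `|zeros_mass (F ++ map (addn n) F) - zeros_mass F * zeros_mass F|)
    @ \oo --> 0.
Proof.
have mA := measurable_zeros_on_orbit F.
apply: cvg_trans (mu_weakly_mixing _ _ mA mA (@subIsetr _ _ _) (@subIsetr _ _ _)).
apply: near_eq_cvg; apply: nearW => N; congr (_ * _); apply: eq_bigr => n _.
by rewrite preimage_iter_shift_zeros_on.
Qed.

Lemma zeros_mass_extend F : 0 < zeros_mass F ->
  exists n, [/\ (0 < n)%N, {in F, forall s, ~ S (s + n)%N}
              & 0 < zeros_mass (F ++ map (addn n) F)].
Proof.
move=> mass_gt0.
have [m] := cesaro_mixing_return mass_gt0 (cesaro_zeros_on F) (cesaro_mixing_zeros_on F).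
rewrite in_zeros_on => /allP zeros_m mass_m; exists m.+1; split => // s /zeros_m.
by rewrite iter_shiftE /xi /Defs.indic addnS => /asboolPn.
Qed.

Lemma zeros_mass0_gt0 (d : R) :
  has_density S d -> d < 1 -> 0 < zeros_mass [:: 0%N].
Proof.
move=> Sd d_lt1.
pose b n : R := (iter n Defs.shift xi \in zeros_on [:: 0%N])%:R.
have b_compl n : b n = 1 - (if `[< S n.+1 >] then 1 else 0).
  rewrite /b in_zeros_on /= andbT iter_shiftE add0n /xi /Defs.indic.
  by case: asboolP => _; rewrite ?subrr ?subr0.
have mean_eq : \forall N \near \oo, 1 - dens_avg S N = cesaro_mean b N.
  near=> N; have N_gt0 : (0 < N)%N by near: N; exact: nbhs_infty_gt.
  rewrite /cesaro_mean /dens_avg big_add1 big_mkord.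
  rewrite (eq_bigr _ (fun (n : 'I_N) _ => b_compl n)).
  by rewrite sumrB sumr_const card_ord mulrBr mulVf // pnatr_eq0 -lt0n.
have mean_cvg : cesaro_mean b @ \oo --> 1 - d.
  by apply: cvg_trans (near_eq_cvg mean_eq) _; apply: cvgB Sd; exact: cvg_cst.
by rewrite -(cvg_unique _ mean_cvg (cesaro_zeros_on _)) // subr_gt0.
Unshelve. all: by end_near.
Qed.
End GenericWeaklyMixing.

Theorem mainTheorem8 (R : realType) (S : set nat) (d : R)
  (HSpos : S `<=` [set n | (0 < n)%N])
  (HWM : WM_set R S) (Hd : has_density S d) (Hd1 : d < 1) :
  ~ IPstar S /\ (exists E, IP_set E /\ E `&` S = set0).
Proof.
have [[mu [_ _ generic mixing]] _] := HWM.
have [E [IP_E ES]] : exists E, IP_set E /\ E `&` S = set0.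
  apply: (exists_IP_set_disjoint S (fun F => 0 < @zeros_mass R S mu F)).
    exact: zeros_mass0_gt0 generic _ Hd Hd1.
  by move=> F; exact: zeros_mass_extend generic mixing F.
split; last by exists E.
by move/(_ E IP_E); rewrite ES => -[].
Qed.
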